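(* Let $M$ be an $R$-module and $S=R\setminus W_R(M)$. (a) If $S^{-1}R=R$, then $M$ satisfies the dual of proper strong Property $\mathcal{A}$ if and only if $M$ satisfies the dual of Property $\mathcal{A}$. (b) If $S^{-1}R\neq R$, then $M$ satisfies the dual of proper strong Property $\mathcal{A}$ if and only if $M$ satisfies the dual of strong Property $\mathcal{A}$.
   Context: All rings are commutative with identity. For an $R$-module $M$, $W_R(M)=\{r\in R : rM\neq M\}$. $M$ satisfies the dual of Property $\mathcal{A}$ if for every finitely generated ideal $I$ of $R$ with $I\subseteq W_R(M)$ we have $IM\neq M$. $M$ satisfies the dual of proper strong Property $\mathcal{A}$ if for every proper finitely generated ideal $I=\langle a_1,\dots,a_n\rangle$ of $R$ with $a_i\in W_R(M)$ for all $i$, we have $IM\neq M$. A proper submodule $L$ of $M$ is completely irreducible if whenever $L=\bigcap_{i\in I}L_i$ for a family $\{L_i\}$ of submodules, then $L=L_i$ for some $i$. $M$ satisfies the dual of strong Property $\mathcal{A}$ if for any $a_1,\dots,a_n\in W_R(M)$ there is a completely irreducible submodule $L$ of $M$ with $a_iM\subseteq L\neq M$ for all $i$. For a multiplicatively closed set $S$, ''$S^{-1}R=R$'' means that the canonical map $R\to S^{-1}R$ is an isomorphism (equivalently every element of $S$ is a unit of $R$). *)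

From HB Require Import structures.
From mathcomp Require Import all_boot all_order all_algebra.
Set Implicit Arguments. Unset Strict Implicit. Unset Printing Implicit Defensive.
Import GRing.Theory.
Local Open Scope ring_scope.

Section ModuleDefs.
Variables (R : comPzRingType) (M : lmodType R).

Definition W (r : R) : Prop := ~ (forall m : M, exists m' : M, r *: m' = m).

Definition in_ideal (n : nat) (a : 'I_n -> R) (x : R) : Prop :=
  exists c : 'I_n -> R, x = \sum_(i < n) c i * a i.

Definition IM_eq_M (n : nat) (a : 'I_n -> R) : Prop :=
  forall m : M, exists v : 'I_n -> M, m = \sum_(i < n) a i *: v i.

Definition dual_property_A : Prop :=
  forall (n : nat) (a : 'I_n -> R),
    (forall x, in_ideal a x -> W x) -> ~ IM_eq_M a.

Definition dual_proper_strong_property_A : Prop :=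
  forall (n : nat) (a : 'I_n -> R),
    ~ in_ideal a 1 -> (forall i, W (a i)) -> ~ IM_eq_M a.

Definition is_submodule (L : M -> Prop) : Prop :=
  L 0 /\ (forall x y, L x -> L y -> L (x + y)) /\ (forall (r : R) x, L x -> L (r *: x)).

Definition completely_irreducible (L : M -> Prop) : Prop :=
  is_submodule L /\ (exists m, ~ L m) /\
  forall (I : Type) (F : I -> M -> Prop),
    (forall i, is_submodule (F i)) ->
    (forall m, L m <-> forall i, F i m) ->
    exists i, forall m, L m <-> F i m.

Definition dual_strong_property_A : Prop :=
  forall (n : nat) (a : 'I_n -> R), (forall i, W (a i)) ->
    exists L : M -> Prop, completely_irreducible L /\
      (forall i (m : M), L (a i *: m)).

(* S^{-1} R = R where S = R \ W_R(M): every element of S is a unit *)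
Definition loc_trivial : Prop :=
  forall r : R, ~ W r -> exists s : R, r * s = 1.

End ModuleDefs.

(* Part (a): if every element outside W_R(M) is a unit, a finitely generated
   ideal inside W_R(M) is proper and, conversely, every element of a proper
   ideal lies in W_R(M).  Part (b): pick r outside W_R(M) that is not a unit.
   Since rM = M, the ideal (a_1 r, ..., a_n r) is proper, still generated in
   W_R(M), and has the same image IM as (a_1, ..., a_n); hence IM <> M, and a
   Zorn argument enlarges the proper submodule IM to a submodule maximal
   with respect to avoiding a fixed point outside it, which is completely
   irreducible. *)
From mathcomp Require Import all_boot all_order all_algebra.
From mathcomp Require Import boolp classical_sets.
Set Implicit Arguments. Unset Strict Implicit. Unset Printing Implicit Defensive.
Import GRing.Theory.
Local Open Scope ring_scope.
Local Open Scope classical_set_scope.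

Section DualPropertyA.
Variables (R : comPzRingType) (M : lmodType R).
Implicit Types (r : R) (m x : M) (L N : M -> Prop).

Lemma not_W1 : ~ W M 1.
Proof. by apply=> m; exists m; rewrite scale1r. Qed.

Lemma notW_scale_surj r : ~ W M r -> forall m, exists m', r *: m' = m.
Proof. exact: contrapT. Qed.

Lemma W_mulr r s : W M r -> W M (r * s).
Proof.
move=> Wr rsM; apply: Wr => m; have [m' <-] := rsM m.
by exists (s *: m'); rewrite scalerA.
Qed.

Lemma in_ideal_gen n (a : 'I_n -> R) i : in_ideal a (a i).
Proof.
exists (fun j => if j == i then 1 else 0).
by rewrite (bigD1 i) //= eqxx mul1r big1 ?addr0 // => j /negbTE ->; rewrite mul0r.
Qed.

Lemma in_ideal_mulr n (a : 'I_n -> R) r s :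
  in_ideal (fun i => a i * r) s -> exists2 t, in_ideal a t & s = t * r.
Proof.
move=> [c ->]; exists (\sum_(i < n) c i * a i); first by exists c.
by rewrite mulr_suml; apply: eq_bigr => i _; rewrite mulrA.
Qed.

Definition ideal_image n (a : 'I_n -> R) x : Prop :=
  exists v : 'I_n -> M, x = \sum_(i < n) a i *: v i.

Lemma ideal_image_submodule n (a : 'I_n -> R) : is_submodule (ideal_image a).
Proof.
split; [|split].
- by exists (fun=> 0); rewrite big1 // => i _; rewrite scaler0.
- move=> _ _ [v ->] [w ->]; exists (fun i => v i + w i).
  by rewrite -big_split; apply: eq_bigr => i _; rewrite scalerDr.
- move=> s _ [v ->]; exists (fun i => s *: v i).
  by rewrite scaler_sumr; apply: eq_bigr => i _; rewrite !scalerA mulrC.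
Qed.

Lemma ideal_image_scale n (a : 'I_n -> R) i m : ideal_image a (a i *: m).
Proof.
exists (fun j => if j == i then m else 0).
by rewrite (bigD1 i) //= eqxx big1 ?addr0 // => j /negbTE ->; rewrite scaler0.
Qed.

Lemma ideal_image_min n (a : 'I_n -> R) L :
  is_submodule L -> (forall i m, L (a i *: m)) -> ideal_image a `<=` L.
Proof. by move=> [L0 [LD _]] La _ [v ->]; apply: big_ind. Qed.

Lemma ideal_image_mulr n (a : 'I_n -> R) r :
  ~ W M r -> ideal_image a `<=` ideal_image (fun i => a i * r).
Proof.
move=> /notW_scale_surj rM _ [v ->].
have [w Hw] := choice (fun i => rM (v i)).
by exists w; apply: eq_bigr => i _; rewrite -scalerA Hw.
Qed.

Definition maximal_avoiding m0 L : Prop :=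
  [/\ is_submodule L, ~ L m0 &
      forall L', is_submodule L' -> L `<=` L' -> ~ L' m0 -> L' `<=` L].

Lemma maximal_avoiding_completely_irreducible m0 L :
  maximal_avoiding m0 L -> completely_irreducible L.
Proof.
move=> [Lsub Lm0 Lmax]; split=> //; split; first by exists m0.
move=> I F Fsub LF.
have [i Fim0] : exists i, ~ F i m0.
  by apply/existsNP => Fm0; apply/Lm0/LF.
have LFi : L `<=` F i by move=> x /LF.
exists i => m; split; first exact: LFi.
exact: Lmax.
Qed.

(* Zorn is applied to the sets A with A \/ N a submodule avoiding m0, so
   that the empty chain is harmless. *)
Lemma exists_maximal_avoiding N m0 :
  is_submodule N -> ~ N m0 -> exists2 L, maximal_avoiding m0 L & N `<=` L.
Proof.
move=> Nsub Nm0; have [N0 [ND NZ]] := Nsub.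
pose P (A : set M) := is_submodule (A `|` N) /\ ~ (A `|` N) m0.
have [A [[ANsub ANm0] Amax]] : exists A, P A /\ forall B, A `<` B -> ~ P B.
  apply: Zorn_bigcup => F FP Ftot.
  have chain_pair x y : (\bigcup_(X in F) X `|` N) x ->
      (\bigcup_(X in F) X `|` N) y ->
      (N x /\ N y) \/ exists2 C, F C & (C `|` N) x /\ (C `|` N) y.
    move=> [[X FX Xx]|Nx] [[Y FY Yy]|Ny]; last by left.
    - right; have [XY|YX] := Ftot _ _ FX FY.
        by exists Y => //; split; left=> //; apply: XY.
      by exists X => //; split; left=> //; apply: YX.
    - by right; exists X => //; split; [left|right].
    - by right; exists Y => //; split; [right|left].
  split; [split; [by right|split]|].
  - move=> x y Ux Uy; have [[Nx Ny]|[C FC [Cx Cy]]] := chain_pair x y Ux Uy.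
      by right; apply: ND.
    have [_ [CD _]] := (FP C FC).1.
    by case: (CD x y Cx Cy) => [Cxy|]; [left; exists C|right].
  - move=> s x [[X FX Xx]|Nx]; last by right; apply: NZ.
    have [_ [_ XZ]] := (FP X FX).1.
    by case: (XZ s x (or_introl Xx)) => [Xsx|]; [left; exists X|right].
  - by move=> [[X FX Xm0]|//]; apply: (FP X FX).2; left.
exists (A `|` N); last by move=> x Nx; right.
split=> // L' L'sub AN_L' L'm0 x L'x.
have L'N : L' `|` N = L'.
  by rewrite predeqE => y; split=> [[//|Ny]|]; [apply: AN_L'; right|left].
apply: contrapT => ANx; apply: (Amax L'); last by rewrite /P L'N.
by split=> [y Ay|]; [apply: AN_L'; left|move/(_ x L'x) => Ax; apply: ANx; left].
Qed.

Lemma completely_irreducible_above N m0 :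
  is_submodule N -> ~ N m0 -> exists2 L, completely_irreducible L & N `<=` L.
Proof.
move=> Nsub Nm0; have [L Lmax NL] := exists_maximal_avoiding Nsub Nm0.
by exists L => //; apply: maximal_avoiding_completely_irreducible Lmax.
Qed.

Lemma dual_property_A_of_proper_strong :
  dual_proper_strong_property_A M -> dual_property_A M.
Proof.
move=> PS n a aW; apply: PS; first by move/aW; apply: not_W1.
by move=> i; apply/aW/in_ideal_gen.
Qed.

Lemma dual_proper_strong_of_property_A :
  loc_trivial M -> dual_property_A M -> dual_proper_strong_property_A M.
Proof.
move=> LT PA n a a1 _; apply: PA => x [c ->]; apply: contrapT => /LT [s Hs].
apply: a1; exists (fun i => c i * s); rewrite -Hs mulr_suml.
by apply: eq_bigr => i _; rewrite mulrAC.
Qed.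

Lemma dual_proper_strong_of_strong :
  dual_strong_property_A M -> dual_proper_strong_property_A M.
Proof.
move=> SA n a _ aW aM; have [L [[Lsub [[m Lm] _]] aL]] := SA n a aW.
by apply/Lm/(ideal_image_min Lsub aL)/aM.
Qed.

Lemma dual_strong_of_proper_strong :
  ~ loc_trivial M -> dual_proper_strong_property_A M -> dual_strong_property_A M.
Proof.
move=> /existsNP [r /not_implyP [rM /forallNP r_nonunit]] PS n a aW.
pose b i := a i * r.
have b1 : ~ in_ideal b 1.
  by move=> /in_ideal_mulr [y _ y1]; apply: (r_nonunit y); rewrite mulrC -y1.
have /existsNP [m0 bm0] := PS n b b1 (fun i => W_mulr (s := r) (aW i)).
have am0 : ~ ideal_image a m0 by move/(ideal_image_mulr rM).
have [L Lci aL] := completely_irreducible_above (ideal_image_submodule a) am0.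
by exists L; split=> // i m; apply/aL/ideal_image_scale.
Qed.

End DualPropertyA.

Theorem theorem3p8 (R : comPzRingType) (M : lmodType R) :
  (loc_trivial M ->
     (dual_proper_strong_property_A M <-> dual_property_A M)) /\
  (~ loc_trivial M ->
     (dual_proper_strong_property_A M <-> dual_strong_property_A M)).
Proof.
split=> [LT | nLT]; split.
- exact: dual_property_A_of_proper_strong.
- exact: dual_proper_strong_of_property_A.
- exact: dual_strong_of_proper_strong.
- exact: dual_proper_strong_of_strong.
Qed.
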